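(* Let $V$ be a finite elementary abelian $2$-group (a finite-dimensional $\mathbb F_2$-vector space) acting simply transitively by translations on a finite set $Q=a+V$, and let $\pi:Q\to X$ be a surjection which is support-equivariant, meaning that $\pi(q)=\pi(q')$ implies $\pi(q+v)=\pi(q'+v)$ for all $q,q'\in Q$ and $v\in V$. Then $|X|$ is a power of $2$. In particular, $|X|\neq 3$. *)

From HB Require Import structures.
From mathcomp Require Import all_boot all_order all_algebra.
Set Implicit Arguments. Unset Strict Implicit. Unset Printing Implicit Defensive.
Import GRing.Theory.
Local Open Scope ring_scope.

Definition is_action (V : zmodType) (Q : Type) (act : Q -> V -> Q) : Prop :=
  (forall q, act q 0 = q) /\ (forall q u v, act (act q u) v = act q (u + v)).

Definition simply_transitive (V : zmodType) (Q : Type) (act : Q -> V -> Q) : Prop :=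
  forall q q' : Q, exists! v : V, act q v = q'.

Definition support_equivariant (V : zmodType) (Q X : Type)
    (act : Q -> V -> Q) (pi : Q -> X) : Prop :=
  forall q q' : Q, forall v : V, pi q = pi q' -> pi (act q v) = pi (act q' v).

From HB Require Import structures.
From mathcomp Require Import all_boot all_order all_algebra.
From mathcomp Require Import fingroup pgroup cyclic sylow.
Set Implicit Arguments.
Unset Strict Implicit.
Unset Printing Implicit Defensive.

Import GRing.Theory.
Local Open Scope ring_scope.

(* Transporting pi along the orbit map v |-> a + v gives a surjection f : V -> X
   whose fibres are the cosets of the subgroup {v | f v = f 0}; hence |X| divides
   |V|, which is a power of 2 by Cauchy's theorem since every v has order <= 2. *)

Lemma pnat_card_exponent (p : nat) (V : finZmodType) :
  prime p -> (forall v : V, v *+ p = 0) -> p.-nat #|V|.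
Proof.
move=> p_pr Vp; have : (p.-group [set: V])%g.
  apply/pgroupP => q q_pr q_dvd; have [x _ ox] := Cauchy q_pr q_dvd.
  have : (#[x]%g %| p)%N by rewrite order_dvdn FinRing.zmodXgE Vp.
  by rewrite ox (dvdn_prime2 q_pr p_pr) inE.
by rewrite /pgroup cardsT.
Qed.

Lemma card_translation_invariant_fibres (V : finZmodType) (X : finType) (f : V -> X) :
    (forall x, exists v, f v = x) ->
    (forall u v w, f u = f v -> f (u + w) = f (v + w)) ->
  #|V| = (#|X| * #|[set v | f v == f 0%R]|)%N.
Proof.
move=> f_onto f_transl; set K := [set v | f v == f 0].
have fibreE v0 v : (f v == f v0) = (f (v - v0) == f 0).
  apply/eqP/eqP => [/(f_transl _ _ (- v0)) | /(f_transl _ _ v0)].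
    by rewrite subrr.
  by rewrite subrK add0r.
have card_fibre x : #|[pred v | f v == x]| = #|K|.
  have [v0 <-] := f_onto x; rewrite -(card_preimset K (addIr (- v0))).
  by apply: eq_card => v; rewrite !inE fibreE.
rewrite -sum_nat_const -[LHS]sum1_card (partition_big f predT) //=.
by apply: eq_bigr => x _; rewrite sum1_card card_fibre.
Qed.

Theorem proposition6p2 (V : finZmodType) (Q X : finType)
    (act : Q -> V -> Q) (a : Q) (pi : Q -> X)
    (hV2 : forall v : V, v + v = 0)
    (hact : is_action act)
    (hst : simply_transitive act)
    (hsurj : forall x : X, exists q : Q, pi q = x)
    (hsupp : support_equivariant act pi) :
  (exists k : nat, #|X| = (2 ^ k)%N) /\ #|X| <> 3%N.
Proof.
have [_ actD] := hact; pose f v := pi (act a v).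
have f_onto x : exists v, f v = x.
  by have [q <-] := hsurj x; have [v [<- _]] := hst a q; exists v.
have f_transl u v w : f u = f v -> f (u + w) = f (v + w).
  by move/(hsupp _ _ w); rewrite /f !actD.
have X_dvd_V : (#|X| %| #|V|)%N.
  by rewrite (card_translation_invariant_fibres f_onto f_transl) dvdn_mulr.
have V_2nat : (2%N).-nat #|V| by apply: pnat_card_exponent => // v; rewrite mulr2n.
have [k ->] := p_natP (pnat_dvd X_dvd_V V_2nat).
split; first by exists k.
by case: k => [|k] // /(congr1 odd); rewrite oddX.
Qed.
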